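(* Let $R=k[x_1,x_2,x_3]$ and let $I$ be a homogeneous $\mathfrak m$-primary ideal of $R$. If some minimal generator of $I$ of degree $n$ equals $\ell s$ for a linear form $\ell$ and a socle generator $s$ for $I$, then $\beta_{2,n+1}(R/I)\ge2$.
   Context: $k$ is a field, $R$ has the standard grading, $\mathfrak m=(x_1,x_2,x_3)$, and $\beta_{i,j}(R/I)=\dim_k\operatorname{Tor}_i^R(R/I,k)_j$. The socle of $R/I$ is $(I:\mathfrak m)/I$; homogeneous elements $s_1,\dots,s_r\in R$ are socle generators for $I$ if their images minimally generate the socle of $R/I$. *)

From HB Require Import structures.
From mathcomp Require Import all_boot all_order all_algebra.
From mathcomp Require Import mpoly.

Set Implicit Arguments.
Unset Strict Implicit.
Unset Printing Implicit Defensive.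

Import GRing.Theory.
Local Open Scope ring_scope.

Section Defs.
Variable k : fieldType.
Local Notation R := {mpoly k[3]}.

Definition is_ideal (I : R -> Prop) : Prop :=
  I 0 /\ (forall f g, I f -> I g -> I (f + g)) /\ (forall r f, I f -> I (r * f)).

Definition homogeneous_ideal (I : R -> Prop) : Prop :=
  is_ideal I /\ forall f d, I f -> I (pihomog mdeg d f).

(* the homogeneous maximal ideal m = (x1,x2,x3) = polynomials with zero
   constant term *)
Definition in_m (f : R) : Prop := f@_0%MM = 0.

Definition m_primary (I : R -> Prop) : Prop :=
  is_ideal I /\ forall f, (exists e : nat, I (f ^+ e)) <-> in_m f.

Definition remove_at (G : seq R) (i : nat) : seq R := take i G ++ drop i.+1 G.

Definition generates (I : R -> Prop) (G : seq R) : Prop :=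
  forall f, I f <-> exists c : 'I_(size G) -> R, f = \sum_(i < size G) c i * G`_i.

Definition minimal_generator_of_degree (I : R -> Prop) (g : R) (n : nat) : Prop :=
  g \is n.-homog /\
  exists G : seq R,
    [/\ all (fun p => p \is homog mdeg) G, generates I G,
        (forall i, (i < size G)%N -> ~ generates I (remove_at G i)) & g \in G].

Definition colon_m (I : R -> Prop) (f : R) : Prop :=
  forall g, in_m g -> I (g * f).

(* the images of S in R/I generate the socle (I:m)/I as an R-module *)
Definition generates_socle (I : R -> Prop) (S : seq R) : Prop :=
  (forall f, f \in S -> colon_m I f) /\
  forall f, colon_m I f ->
    exists c : 'I_(size S) -> R, I (f - \sum_(i < size S) c i * S`_i).

Definition socle_generator (I : R -> Prop) (s : R) : Prop :=
  exists S : seq R,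
    [/\ all (fun p => p \is homog mdeg) S, generates_socle I S,
        (forall i, (i < size S)%N -> ~ generates_socle I (remove_at S i)) & s \in S].

(* ---------- graded free resolutions of R/I ----------
   F_i = (+)_{a < size (degs i)} R(- nth 0 (degs i) a).
   The differential F_{i+1} -> F_i sends the a-th basis vector of F_{i+1}
   to \sum_b D (i+1) a b * e_b.  The augmentation F_0 -> R/I sends the
   b-th basis vector to (the class of) e0 b. *)
Variables (degs : nat -> seq nat) (D : nat -> nat -> nat -> R) (e0 : nat -> R).

Definition rk i := size (degs i).
Definition dg i (a : nat) := nth 0%N (degs i) a.

Definition dmap i (v : 'I_(rk i.+1) -> R) : 'I_(rk i) -> R :=
  fun b => \sum_(a < rk i.+1) v a * D i.+1 a b.

Definition aug (v : 'I_(rk 0) -> R) : R := \sum_(b < rk 0) v b * e0 b.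

Definition graded_free_resolution (I : R -> Prop) : Prop :=
  [/\
      (forall b, (b < rk 0)%N -> e0 b \is (dg 0 b).-homog),
      (forall i a b, (a < rk i.+1)%N -> (b < rk i)%N ->
          D i.+1 a b \is (dg i.+1 a - dg i b)%N.-homog /\
          ((dg i.+1 a < dg i b)%N -> D i.+1 a b = 0)),
      (forall f, exists v, I (f - aug v)),
      (forall v, I (aug v) <-> exists u, forall b, v b = dmap u b) &
      (forall i (v : 'I_(rk i.+1) -> R),
          (forall b, dmap v b = 0) <-> exists u, forall b, v b = dmap u b)].

(* F (x)_R k : the differential F_{i+1} (x) k -> F_i (x) k, as a matrix
   acting on row vectors; entries are the images in k = R/m *)
Definition Tk i : 'M[k]_(rk i.+1, rk i) := \matrix_(a, b) (D i.+1 a b)@_0%MM.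

Definition Pdeg i (j : nat) : 'M[k]_(rk i) :=
  diag_mx (\row_a ((dg i a == j)%:R : k)).

Definition cycles i j : 'M[k]_(rk i) :=
  match i return 'M[k]_(rk i) with
  | 0 => Pdeg 0 j
  | i'.+1 => (Pdeg i'.+1 j :&: kermx (Tk i'))%MS
  end.

(* dim_k Tor_i^R(R/I, k)_j computed from the resolution:
   dim of degree-j homology of F (x)_R k at position i *)
Definition tor_dim i j : nat :=
  (\rank (cycles i j) - \rank (Pdeg i.+1 j *m Tk i))%N.

End Defs.

From Pilot Require Import Defs.
From HB Require Import structures.
From mathcomp Require Import all_boot all_order all_algebra.
From mathcomp Require Import mpoly.
From mathcomp Require Import ring zify.
Set Implicit Arguments. Unset Strict Implicit. Unset Printing Implicit Defensive.
Import GRing.Theory.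
Local Open Scope ring_scope.

(* Lift [s] to [v0] in [F_0] and [l * v0] to [wl] in [F_1]. As [X_j * s] lies in [I],
   [X_j * v0] lifts to some [w_j], and [X_j * wl - l * w_j] is the boundary of some [y_j]
   in [F_2]; the degree-[n+1] residues of the [y_j] are cycles of [F (x) k]. Pick [j1], [j2]
   on which the plane [ker l] projects onto [k^2]. If a nontrivial combination
   [al * y_j1 + be * y_j2] had a boundary residue, substituting [X_i := p_i * l'], where
   [l' = al X_j1 + be X_j2] and [p] in [ker l] is chosen with [l'(p) = 1], kills [l] and
   fixes [l'], and turns that boundary into an expression of [l * s] as an element of
   [m I], contradicting the minimality of the generator [l * s]. *)

Section IdealOfFamily.
Variables (n : nat) (A : comNzRingType) (T : finType).
Local Notation P := {mpoly A[n]}.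

Definition in_ideal_of (g : T -> P) (f : P) := exists r : T -> P, f = \sum_t g t * r t.

Variable g : T -> P.

Lemma in_ideal_of0 : in_ideal_of g 0.
Proof. by exists (fun _ => 0); rewrite big1 // => t _; rewrite mulr0. Qed.

Lemma in_ideal_ofD f h : in_ideal_of g f -> in_ideal_of g h -> in_ideal_of g (f + h).
Proof.
move=> [r1 ->] [r2 ->]; exists (fun t => r1 t + r2 t).
by rewrite -big_split /=; apply: eq_bigr => t _; rewrite mulrDr.
Qed.

Lemma in_ideal_ofMl a f : in_ideal_of g f -> in_ideal_of g (a * f).
Proof.
move=> [r ->]; exists (fun t => a * r t).
by rewrite mulr_sumr; apply: eq_bigr => t _; rewrite mulrCA.
Qed.

Lemma in_ideal_of_gen t : in_ideal_of g (g t).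
Proof.
exists (fun u => (u == t)%:R); rewrite (bigD1 t) //= eqxx mulr1 big1 ?addr0 //.
by move=> u /negbTE ->; rewrite mulr0.
Qed.

End IdealOfFamily.

Section Polynomials.
Variables (n : nat) (A : comNzRingType).
Local Notation P := {mpoly A[n]}.

Lemma mcoeff0_eq0_in_ideal_X (p : P) : p@_0 = 0 -> in_ideal_of (fun i : 'I_n => 'X_i) p.
Proof.
move=> p0; suff : in_ideal_of (fun i : 'I_n => 'X_i) (p - (p@_0)%:MP).
  by rewrite p0 mpolyC0 subr0.
clear p0; elim/mpolyind: p => [|c m p _ _ IHp]; first by rewrite mcoeff0 subr0; apply: in_ideal_of0.
rewrite mcoeffD mcoeffZ mcoeffX mpolyCD opprD addrACA; apply: in_ideal_ofD => //.
have [->|m_neq0] := eqVneq m 0%MM.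
  by rewrite mulr1 mpolyX0 alg_mpolyC subrr; apply: in_ideal_of0.
have [i mi_gt0] : exists i, m i != 0%N.
  apply/existsP; apply: contraR m_neq0 => /existsPn m0; apply/eqP/mnmP => j.
  by rewrite mnm0E; apply/eqP; rewrite (negbNE (m0 j)).
have -> : 'X_[m] = 'X_i * 'X_[m - U_(i)] :> P by rewrite mulrC -mpolyXD submK ?lep1mP.
rewrite mulr0 mpolyC0 subr0 scalerAr mulrC.
by apply: in_ideal_ofMl; apply: in_ideal_of_gen.
Qed.

Lemma sub_comp_mpoly_in_ideal (lq : n.-tuple P) (h : P) :
  in_ideal_of (fun i : 'I_n => 'X_i - lq`_i) (h - (h \mPo lq)).
Proof.
pose Q h := in_ideal_of (fun i : 'I_n => 'X_i - lq`_i) (h - (h \mPo lq)).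
have QM a b : Q a -> Q b -> Q (a * b).
  move=> Qa Qb; rewrite /Q rmorphM /=.
  have -> : a * b - (a \mPo lq) * (b \mPo lq) =
            a * (b - (b \mPo lq)) + (b \mPo lq) * (a - (a \mPo lq)) by ring.
  by apply: in_ideal_ofD; apply: in_ideal_ofMl.
have Q1 : Q 1 by rewrite /Q rmorph1 subrr; apply: in_ideal_of0.
have QX m : Q 'X_[m].
  rewrite mpolyXE_id; apply: (big_ind Q) => // i _.
  elim: (m i) => [|e IHe]; rewrite ?expr0 // exprS; apply: QM => //.
  by rewrite /Q comp_mpolyXU; apply: in_ideal_of_gen.
elim/mpolyind: h => [|c m p _ _ Qp]; first by rewrite /Q raddf0 subr0; apply: in_ideal_of0.
rewrite /Q raddfD /= opprD addrACA; apply: in_ideal_ofD => //.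
rewrite comp_mpolyZ -scalerBr -mul_mpolyC; apply: in_ideal_ofMl; exact: QX.
Qed.

Lemma dhomog_mcoeff0 d (p : P) : p \is d.-homog -> (0 < d)%N -> p@_0 = 0.
Proof. by move=> hp d_gt0; apply: (dhomog_nemf_coeff hp); rewrite /= mdeg0 eq_sym -lt0n. Qed.

Lemma dhomog1E (l : P) : l \is 1.-homog -> l = \sum_i l@_U_(i) *: 'X_i.
Proof.
move=> hl; apply/mpolyP => m; rewrite raddf_sum /=.
under eq_bigr do rewrite mcoeffZ mcoeffX.
have [/mdeg1P[i /eqP ->]|m_ndeg1] := boolP (mdeg m == 1%N).
  rewrite (bigD1 i) //= eqxx mulr1 big1 ?addr0 // => j ji.
  by rewrite eq_mnm1 (negbTE ji) mulr0.
rewrite (dhomog_nemf_coeff hl m_ndeg1) big1 // => j _.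
by case: eqP => [mE|_]; [rewrite -mE mdeg1 in m_ndeg1 | rewrite mulr0].
Qed.

Lemma comp_mpoly_dhomog1 (l : P) (c : 'I_n -> A) (f : P) : l \is 1.-homog ->
  l \mPo [tuple c i *: f | i < n] = (\sum_i l@_U_(i) * c i) *: f.
Proof.
move=> hl; rewrite {1}(dhomog1E hl) raddf_sum scaler_suml /=; apply: eq_bigr => i _.
by rewrite comp_mpolyZ comp_mpolyXU nth_mktuple scalerA.
Qed.

Lemma mcoeff_pihomog d (p : P) m :
  (pihomog mdeg d p)@_m = if mdeg m == d then p@_m else 0.
Proof.
case: eqP => [<-|/eqP ne]; last exact: (dhomog_nemf_coeff (pihomogP mdeg d p) ne).
have hK : (mmeasure mdeg p <= maxn (mmeasure mdeg p) (mdeg m).+1)%N by rewrite leq_maxl.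
rewrite [in RHS](pihomog_partitionE hK) [RHS]raddf_sum /=.
have lt : (mdeg m < maxn (mmeasure mdeg p) (mdeg m).+1)%N by rewrite leq_max ltnSn orbT.
rewrite (bigD1 (Ordinal lt)) //= big1 ?addr0 // => i ne.
apply: (dhomog_nemf_coeff (pihomogP mdeg _ _)).
by apply: contra ne => /eqP h; apply/eqP/val_inj.
Qed.

Lemma pihomog0_mcoeff0 (p : P) : p@_0 = 0 -> pihomog mdeg 0 p = 0.
Proof.
move=> p0; apply/mpolyP => m; rewrite mcoeff_pihomog mcoeff0.
by case: eqP => // /eqP; rewrite mdeg_eq0 => /eqP ->.
Qed.

Lemma pihomogMl e d (q p : P) : q \is e.-homog ->
  pihomog mdeg d (q * p) = if (e <= d)%N then q * pihomog mdeg (d - e) p else 0.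
Proof.
move=> hq; set K := maxn (mmeasure mdeg p) d.+1.
have hK : (mmeasure mdeg p <= K)%N by rewrite leq_maxl.
rewrite {1}(pihomog_partitionE hK) mulr_sumr raddf_sum /=.
have piqp (i : 'I_K) : pihomog mdeg d (q * pihomog mdeg i p) =
    if (e + i == d)%N then q * pihomog mdeg i p else 0.
  have qp_homog : q * pihomog mdeg i p \is (e + i).-homog by apply: dhomogM => //; apply: pihomogP.
  by case: eqP => [<-|/eqP ne]; [rewrite pihomog_dE | rewrite (pihomog_ne0 ne)].
rewrite (eq_bigr _ (fun i _ => piqp i)) -big_mkcond /=.
case: leqP => [le_ed|lt_de].
  have lt : (d - e < K)%N by rewrite leq_max ltnS leq_subr orbT.
  rewrite (big_pred1 (Ordinal lt)) // => i /=.
  apply/eqP/eqP => [eid|->]; last by rewrite subnKC.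
  by apply: val_inj; rewrite /= -eid addKn.
rewrite big_pred0 // => i; apply/negbTE; rewrite neq_ltn; apply/orP; right.
exact: leq_trans (leq_addr _ _).
Qed.

End Polynomials.

Section LinearAlgebra.
Variable F : fieldType.

Lemma mxrank_indep_mod r p q m (Y : 'M[F]_(r, m)) (B : 'M_(p, m)) (C : 'M_(q, m)) :
  (Y <= C)%MS -> (B <= C)%MS -> (forall x : 'rV_r, (x *m Y <= B)%MS -> x = 0) ->
  (r + \rank B <= \rank C)%N.
Proof.
move=> YC BC Yindep.
have Yfree : row_free Y.
  by apply: inj_row_free => x xY0; apply: Yindep; rewrite xY0 sub0mx.
have YB0 : (Y :&: B)%MS = 0.
  apply/eqP; rewrite -submx0; apply/rV_subP => v; rewrite sub_capmx => /andP[/submxP[x ->] xYB].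
  by rewrite (Yindep x xYB) mul0mx sub0mx.
rewrite -(eqP Yfree) -mxrank_disjoint_sum //; apply: mxrankS.
by rewrite addsmx_sub YC BC.
Qed.

Lemma mul_row_col_mx1 m (x : 'rV[F]_(1 + 1)) (u v : 'rV_m) :
  x *m col_mx u v = x 0 (lshift 1 0) *: u + x 0 (rshift 1 0) *: v.
Proof.
rewrite -{1}[x]hsubmxK mul_row_col [lsubmx x]mx11_scalar [rsubmx x]mx11_scalar.
by rewrite !mul_scalar_mx !mxE.
Qed.

Lemma mxrank_indep2_mod p q m (u v : 'rV[F]_m) (B : 'M_(p, m)) (C : 'M_(q, m)) :
  (u <= C)%MS -> (v <= C)%MS -> (B <= C)%MS ->
  (forall a b, ((a *: u + b *: v)%R <= B)%MS -> a = 0 /\ b = 0) ->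
  (2 + \rank B <= \rank C)%N.
Proof.
move=> uC vC BC uv_indep; apply: (mxrank_indep_mod (Y := col_mx u v)) => //.
  by rewrite col_mx_sub uC vC.
move=> x; rewrite mul_row_col_mx1 => /uv_indep[x1 x2].
by rewrite -[x]hsubmxK [lsubmx x]mx11_scalar [rsubmx x]mx11_scalar !mxE x1 x2 raddf0 row_mx0.
Qed.

Lemma exists_lincomb2_eq1 (a b : F) : (a != 0) || (b != 0) -> exists x y, a * x + b * y = 1.
Proof.
have [-> /= b_neq0|a_neq0 _] := eqVneq a 0.
  by exists 0, b^-1; rewrite mul0r add0r divff.
by exists a^-1, 0; rewrite mulr0 addr0 divff.
Qed.

Lemma sum3 (V : nmodType) (f : 'I_3 -> V) : \sum_i f i = f 0 + f 1 + f 2.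
Proof. by rewrite !big_ord_recr big_ord0 /= add0r; congr (f _ + f _ + f _); apply: val_inj. Qed.

(* The kernel of a linear form on F^3 has dimension at least 2, so it projects
   onto F^2 along some pair of coordinates [j1], [j2]. *)
Lemma form3_kernel_pair (a : 'I_3 -> F) : exists j1 j2 : 'I_3,
  forall al be : F, (al != 0) || (be != 0) ->
  exists p : 'I_3 -> F, \sum_i a i * p i = 0 /\ al * p j1 + be * p j2 = 1.
Proof.
have [a0|a0] := eqVneq (a 0) 0; last first.
  exists 1, 2 => al be /exists_lincomb2_eq1 [x [y xy1]].
  exists (fun i : 'I_3 => if i == 0 then - (a 1 * x + a 2 * y) / a 0 else if i == 1 then x else y).
  by rewrite sum3 /=; split => //; field.
have [a1|a1] := eqVneq (a 1) 0; last first.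
  exists 0, 2 => al be /exists_lincomb2_eq1 [x [y xy1]].
  exists (fun i : 'I_3 => if i == 0 then x else if i == 1 then - (a 2 * y) / a 1 else y).
  by rewrite sum3 /= a0; split => //; field.
exists 0, 1 => al be /exists_lincomb2_eq1 [x [y xy1]].
exists (fun i : 'I_3 => if i == 0 then x else if i == 1 then y else 0).
by rewrite sum3 /= a0 a1; split => //; ring.
Qed.

End LinearAlgebra.

Lemma in_m_X {k : fieldType} (i : 'I_3) : in_m ('X_i : {mpoly k[3]}).
Proof. by rewrite /in_m mcoeffX mnm1_eq0. Qed.

Section MinimalGenerators.
Variable k : fieldType.
Local Notation R := {mpoly k[3]}.
Implicit Types (I : R -> Prop) (Gs : seq R).

Definition extn m (c : 'I_m -> R) (j : nat) : R :=
  if insub j is Some o then c o else 0.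

Lemma extnE m (c : 'I_m -> R) (j : 'I_m) : extn c j = c j.
Proof. by rewrite /extn valK. Qed.

Lemma size_remove_at Gs i : (i < size Gs)%N -> size (remove_at Gs i) = (size Gs).-1.
Proof. by move=> hi; rewrite /remove_at size_cat size_take hi size_drop; lia. Qed.

Lemma nth_remove_at Gs i j : (i < size Gs)%N -> (j < (size Gs).-1)%N ->
  (remove_at Gs i)`_j = Gs`_(bump i j).
Proof.
move=> hi hj; rewrite /remove_at nth_cat size_take hi /bump.
case: (ltnP j i) => [lt_ji|le_ij]; first by rewrite nth_take // leqNgt lt_ji.
by rewrite nth_drop; congr nth; lia.
Qed.

Lemma mem_remove_at Gs i x : x \in remove_at Gs i -> x \in Gs.
Proof. by rewrite mem_cat => /orP[/mem_take|/mem_drop]. Qed.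

Lemma big_remove_at Gs i (c : nat -> R) : (i < size Gs)%N ->
  \sum_(j < size Gs) c j * Gs`_j =
  c i * Gs`_i + \sum_(j < size (remove_at Gs i)) c (bump i j) * (remove_at Gs i)`_j.
Proof.
move=> hi; rewrite (bigD1_ord (Ordinal hi)) //= size_remove_at //.
by congr (_ + _); apply: eq_bigr => j _; rewrite nth_remove_at.
Qed.

Lemma ideal_sum I T (c f : 'I_T -> R) :
  is_ideal I -> (forall j, I (f j)) -> I (\sum_j c j * f j).
Proof. by move=> [I0 [ID IM]] If; apply: (big_ind I) => // j _; apply: IM. Qed.

Lemma ideal_opp I f : is_ideal I -> I f -> I (- f).
Proof. by move=> [_ [_ IM]] If; rewrite -mulN1r; apply: IM. Qed.

Lemma generates_mem I Gs x : generates I Gs -> x \in Gs -> I x.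
Proof.
move=> gen x_in; apply/gen; have hi : (index x Gs < size Gs)%N by rewrite index_mem.
exists (fun j => (j == Ordinal hi)%:R).
rewrite (bigD1 (Ordinal hi)) //= eqxx mul1r nth_index // big1 ?addr0 //.
by move=> j /negbTE ->; rewrite mul0r.
Qed.

Lemma generates_remove_at I Gs i (c : nat -> R) : (i < size Gs)%N -> is_ideal I ->
  generates I Gs ->
  Gs`_i = \sum_(j < size (remove_at Gs i)) c j * (remove_at Gs i)`_j ->
  generates I (remove_at Gs i).
Proof.
move=> hi hI gen GsiE f; split; last first.
  move=> [cf ->]; apply: ideal_sum => // j.
  exact/(generates_mem gen)/mem_remove_at/mem_nth.
move/gen => [cf ->].
rewrite (eq_bigr (fun j : 'I_(size Gs) => extn cf j * Gs`_j)); last by move=> j _; rewrite extnE.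
rewrite (big_remove_at _ hi) GsiE mulr_sumr -big_split /=.
exists (fun j => extn cf (bump i j) + extn cf i * c j).
by apply: eq_bigr => j _; rewrite mulrDl mulrA addrC.
Qed.

Definition in_mI I (f : R) :=
  exists t : seq (R * R), (forall x, x \in t -> in_m x.1 /\ I x.2) /\ f = \sum_(x <- t) x.1 * x.2.

Lemma in_mI0 I : in_mI I 0.
Proof. by exists [::]; rewrite big_nil. Qed.

Lemma in_mID I f g : in_mI I f -> in_mI I g -> in_mI I (f + g).
Proof.
move=> [t [ht ->]] [u [hu ->]]; exists (t ++ u); rewrite big_cat; split => // x.
by rewrite mem_cat => /orP[/ht|/hu].
Qed.

Lemma in_mIM I mu a : in_m mu -> I a -> in_mI I (mu * a).
Proof. by move=> mu0 Ia; exists [:: (mu, a)]; rewrite big_seq1; split => // x /[!inE] /eqP ->. Qed.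

Lemma in_mI_sum I T (mu a : 'I_T -> R) :
  (forall t, in_m (mu t)) -> (forall t, I (a t)) -> in_mI I (\sum_t mu t * a t).
Proof.
move=> mu0 Ia; apply: (big_ind (in_mI I)); [exact: in_mI0 | exact: in_mID |].
by move=> t _; apply: in_mIM.
Qed.

Lemma in_mI_generators I Gs f : generates I Gs -> in_mI I f ->
  exists nu : 'I_(size Gs) -> R, (forall j, in_m (nu j)) /\ f = \sum_j nu j * Gs`_j.
Proof.
move=> gen [t [ht ->]]; elim: t ht => [|x t IHt] ht.
  exists (fun _ => 0); split => [j|]; first exact: mcoeff0.
  by rewrite big_nil big1 // => j _; rewrite mul0r.
rewrite big_cons; have [|nu [nu0 ->]] := IHt.
  by move=> y yt; apply: ht; rewrite inE yt orbT.
have [x1m /gen[c ->]] := ht x (mem_head x t).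
exists (fun j => x.1 * c j + nu j); split.
  move=> j; move: x1m (nu0 j); rewrite /in_m mcoeffD (rmorphM (mcoeff 0)) /= => -> ->.
  by rewrite mul0r addr0.
rewrite mulr_sumr -big_split /=.
by apply: eq_bigr => j _; rewrite mulrDl mulrA.
Qed.

(* Taking degree-[n] components makes the coefficient of the degree-[n] generator [g]
   a constant, which vanishes since it lies in [m]. *)
Lemma dhomog_combination Gs g n (nu : 'I_(size Gs) -> R) (i : 'I_(size Gs)) :
  all (fun p => p \is homog mdeg) Gs -> g \is n.-homog -> Gs`_i = g ->
  in_m (nu i) -> g = \sum_j nu j * Gs`_j ->
  exists nu' : nat -> R, nu' i = 0 /\ g = \sum_(j < size Gs) nu' j * Gs`_j.
Proof.
move=> Gs_homog g_homog Gsi nui0 gE.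
pose e (j : nat) := if j == i then n else (mmeasure mdeg Gs`_j).-1.
have Gs_ehomog (j : 'I_(size Gs)) : Gs`_j \is (e j).-homog.
  rewrite /e; case: eqP => [->|_]; first by rewrite Gsi.
  by rewrite -homog_msize; apply: (allP Gs_homog); apply: mem_nth.
exists (fun j => if (e j <= n)%N then pihomog mdeg (n - e j) (extn nu j) else 0); split.
  by rewrite /e eqxx leqnn subnn extnE pihomog0_mcoeff0.
rewrite -{1}(pihomog_dE g_homog) {1}gE raddf_sum /=; apply: eq_bigr => j _.
rewrite mulrC (pihomogMl _ _ (Gs_ehomog j)) extnE.
by case: ifP; rewrite ?mul0r // mulrC.
Qed.

Lemma minimal_generator_notin_mI I g n :
  is_ideal I -> minimal_generator_of_degree I g n -> ~ in_mI I g.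
Proof.
move=> hI [g_homog [Gs [Gs_homog gen mini g_in]]] /(in_mI_generators gen)[nu [nu0 gE]].
have hi : (index g Gs < size Gs)%N by rewrite index_mem.
have Gsi : Gs`_(Ordinal hi) = g by rewrite nth_index.
have [nu' [nu'i0 {}gE]] := dhomog_combination Gs_homog g_homog Gsi (nu0 _) gE.
apply: (mini _ hi); apply: (generates_remove_at (c := fun j => nu' (bump (index g Gs) j))) => //.
by rewrite Gsi {1}gE (big_remove_at _ hi) nu'i0 mul0r add0r.
Qed.

End MinimalGenerators.

Section Resolution.
Variable k : fieldType.
Local Notation R := {mpoly k[3]}.
Variables (I : R -> Prop) (degs : nat -> seq nat) (D : nat -> nat -> nat -> R) (e0 : nat -> R).
Hypothesis hres : graded_free_resolution degs D e0 I.

Local Notation rk := (rk degs).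
Local Notation dg := (dg degs).
Local Notation dmap := (dmap D).
Local Notation aug := (aug e0).
Local Notation Tk := (Tk degs D).
Local Notation Pdeg := (Pdeg k degs).

Lemma dmap_sum i T (r : 'I_T -> R) (u : 'I_T -> 'I_(rk i.+1) -> R) b :
  dmap (fun a => \sum_t r t * u t a) b = \sum_t r t * dmap (u t) b.
Proof.
rewrite /Defs.dmap; under eq_bigr do rewrite mulr_suml.
rewrite exchange_big /=; apply: eq_bigr => t _; rewrite mulr_sumr.
by apply: eq_bigr => a _; rewrite mulrA.
Qed.

Lemma dmapD i (u v : 'I_(rk i.+1) -> R) b :
  dmap (fun a => u a + v a) b = dmap u b + dmap v b.
Proof. by rewrite /Defs.dmap -big_split /=; apply: eq_bigr => a _; rewrite mulrDl. Qed.

Lemma dmapMl i r (u : 'I_(rk i.+1) -> R) b : dmap (fun a => r * u a) b = r * dmap u b.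
Proof. by rewrite /Defs.dmap mulr_sumr; apply: eq_bigr => a _; rewrite mulrA. Qed.

Lemma dmapN i (u : 'I_(rk i.+1) -> R) b : dmap (fun a => - u a) b = - dmap u b.
Proof. by rewrite /Defs.dmap -sumrN; apply: eq_bigr => a _; rewrite mulNr. Qed.

Lemma eq_dmap i (u v : 'I_(rk i.+1) -> R) b : (forall a, u a = v a) -> dmap u b = dmap v b.
Proof. by move=> uv; apply: eq_bigr => a _; rewrite uv. Qed.

Lemma aug_sum T (r : 'I_T -> R) (u : 'I_T -> 'I_(rk 0) -> R) :
  aug (fun b => \sum_t r t * u t b) = \sum_t r t * aug (u t).
Proof.
rewrite /Defs.aug; under eq_bigr do rewrite mulr_suml.
rewrite exchange_big /=; apply: eq_bigr => t _; rewrite mulr_sumr.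
by apply: eq_bigr => a _; rewrite mulrA.
Qed.

Lemma augMl r (u : 'I_(rk 0) -> R) : aug (fun b => r * u b) = r * aug u.
Proof. by rewrite /Defs.aug mulr_sumr; apply: eq_bigr => a _; rewrite mulrA. Qed.

Lemma augD (u v : 'I_(rk 0) -> R) : aug (fun b => u b + v b) = aug u + aug v.
Proof. by rewrite /Defs.aug -big_split /=; apply: eq_bigr => a _; rewrite mulrDl. Qed.

Lemma eq_aug (u v : 'I_(rk 0) -> R) : (forall a, u a = v a) -> aug u = aug v.
Proof. by move=> uv; apply: eq_bigr => a _; rewrite uv. Qed.

Lemma dmapK i (u : 'I_(rk i.+2) -> R) b : dmap (dmap u) b = 0.
Proof. by case: hres => _ _ _ _ exact; move: b; apply/(exact i (dmap u)); exists u. Qed.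

Lemma aug_dmapK (u : 'I_(rk 2) -> R) : aug (dmap (dmap u)) = 0.
Proof. by rewrite /Defs.aug big1 // => b _; rewrite dmapK mul0r. Qed.

Lemma ideal_aug_dmap (u : 'I_(rk 1) -> R) : I (aug (dmap u)).
Proof. by case: hres => _ _ _ exact0 _; apply/exact0; exists u. Qed.

Lemma mcoeff0_D i (a : 'I_(rk i.+1)) (b : 'I_(rk i)) :
  dg i.+1 a != dg i b -> (D i.+1 a b)@_0 = 0.
Proof.
case: hres => _ hD _ _ _ dg_neq.
have [D_homog D_eq0] := hD i a b (ltn_ord a) (ltn_ord b).
have [lt_ab|le_ba] := ltnP (dg i.+1 a) (dg i b); first by rewrite D_eq0 // mcoeff0.
by apply: (dhomog_mcoeff0 D_homog); rewrite subn_gt0 ltn_neqAle le_ba andbT eq_sym.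
Qed.

Definition homog_part i d (v : 'I_(rk i) -> R) : 'I_(rk i) -> R :=
  fun a => if (dg i a <= d)%N then pihomog mdeg (d - dg i a) (v a) else 0.

Lemma homog_part_dmap i d (u : 'I_(rk i.+1) -> R) b :
  dmap (homog_part d u) b = homog_part d (dmap u) b.
Proof.
case: hres => _ hD _ _ _.
rewrite /homog_part /Defs.dmap; case: ifP => le_bd; last first.
  rewrite big1 // => a _; case: ifP => le_ad; last by rewrite mul0r.
  have [_ D_eq0] := hD i a b (ltn_ord a) (ltn_ord b).
  by rewrite D_eq0 ?mulr0 //; apply: leq_ltn_trans le_ad _; rewrite ltnNge le_bd.
rewrite raddf_sum /=; apply: eq_bigr => a _.
have [D_homog D_eq0] := hD i a b (ltn_ord a) (ltn_ord b).
have [lt_ab|le_ba] := ltnP (dg i.+1 a) (dg i b).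
  by rewrite D_eq0 // !mulr0 pihomog0 ?mul0r.
rewrite [in RHS]mulrC (pihomogMl _ _ D_homog).
case: ifP => le_ad; last by rewrite ifF ?mul0r //; lia.
rewrite ifT; last by lia.
by rewrite mulrC; congr (_ * pihomog _ _ _); lia.
Qed.

Lemma homog_part_aug d (v : 'I_(rk 0) -> R) : aug (homog_part d v) = pihomog mdeg d (aug v).
Proof.
case: hres => e0_homog _ _ _ _.
rewrite /homog_part /Defs.aug raddf_sum /=; apply: eq_bigr => b _.
rewrite [in RHS]mulrC (pihomogMl _ _ (e0_homog b (ltn_ord b))).
by case: ifP; rewrite ?mul0r // mulrC.
Qed.

Lemma homog_partB_lin i d (q1 q2 : R) (v1 v2 : 'I_(rk i) -> R) a :
  q1 \is 1.-homog -> q2 \is 1.-homog ->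
  homog_part d.+1 (fun a => q1 * v1 a - q2 * v2 a) a =
  q1 * homog_part d v1 a - q2 * homog_part d v2 a.
Proof.
move=> q1_homog q2_homog.
rewrite /homog_part pihomogB !(pihomogMl _ _ q1_homog, pihomogMl _ _ q2_homog).
have [le_ad|lt_da] := leqP (dg i a) d.
  have -> : (dg i a <= d.+1)%N by lia.
  have -> : (1 <= d.+1 - dg i a)%N by lia.
  by have -> : (d.+1 - dg i a - 1 = d - dg i a)%N by lia.
have -> : (1 <= d.+1 - dg i a)%N = false by lia.
by rewrite !mulr0 subrr; case: ifP.
Qed.

Lemma eq_homog_part i d (u v : 'I_(rk i) -> R) a :
  (forall a, u a = v a) -> homog_part d u a = homog_part d v a.
Proof. by move=> uv; rewrite /homog_part uv. Qed.

Definition deg_residue i d (y : 'I_(rk i) -> R) : 'rV[k]_(rk i) :=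
  \row_c ((dg i c == d)%:R * (y c)@_0).

Lemma deg_residue_lin i d (al be : k) (y1 y2 : 'I_(rk i) -> R) :
  deg_residue d (fun c => al%:MP * y1 c + be%:MP * y2 c) =
  al *: deg_residue d y1 + be *: deg_residue d y2.
Proof. by apply/rowP => c; rewrite !mxE mcoeffD !mcoeffCM; ring. Qed.

Lemma deg_residue_sub_Pdeg i d (y : 'I_(rk i) -> R) : (deg_residue d y <= Pdeg i d)%MS.
Proof.
have -> : deg_residue d y = deg_residue d y *m Pdeg i d.
  apply/rowP => c; rewrite mul_mx_diag !mxE.
  by case: eqP; rewrite ?mul0r ?mulr0 // mul1r mulr1.
exact: submxMl.
Qed.

Lemma mcoeff0_dmap i (y : 'I_(rk i.+1) -> R) a :
  (dmap y a)@_0 = \sum_c (y c)@_0 * (D i.+1 c a)@_0.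
Proof. by rewrite raddf_sum; apply: eq_bigr => c _; rewrite /= (rmorphM (mcoeff 0)). Qed.

Lemma deg_residue_cycle i d (y : 'I_(rk i.+1) -> R) :
  (forall a, (dmap y a)@_0 = 0) -> (deg_residue d y <= cycles degs D i.+1 d)%MS.
Proof.
move=> dy0; rewrite /= sub_capmx deg_residue_sub_Pdeg sub_kermx; apply/eqP/rowP => a.
rewrite !mxE; have [dga|dga] := eqVneq (dg i a) d.
  rewrite -[RHS](dy0 a) mcoeff0_dmap; apply: eq_bigr => c _; rewrite !mxE.
  have [//|dgc] := eqVneq (dg i.+1 c) d; first by rewrite mul1r.
  by rewrite mul0r mcoeff0_D ?mulr0 // dga.
rewrite big1 // => c _; rewrite !mxE.
have [dgc|] := eqVneq (dg i.+1 c) d; last by rewrite !mul0r.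
by rewrite mcoeff0_D ?mulr0 // dgc eq_sym.
Qed.

Lemma Tk_mulK i : Tk i.+1 *m Tk i = 0.
Proof.
apply/matrixP => c a; rewrite !mxE.
pose u : 'I_(rk i.+2) -> R := fun c' => (c' == c)%:R.
have := congr1 (mcoeff 0) (dmapK u a); rewrite mcoeff0 mcoeff0_dmap => ddu0.
rewrite -[X in _ = X]ddu0.
apply: eq_bigr => b _; rewrite !mxE; congr (_ * _).
rewrite /Defs.dmap (bigD1 c) //= /u eqxx mul1r big1 ?addr0 // => c' /negbTE->.
by rewrite mul0r.
Qed.

Lemma boundaries_sub_cycles i d : (Pdeg i.+2 d *m Tk i.+1 <= cycles degs D i.+1 d)%MS.
Proof.
rewrite /= sub_capmx sub_kermx -mulmxA Tk_mulK mulmx0 eqxx andbT.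
have -> : Pdeg i.+2 d *m Tk i.+1 = Pdeg i.+2 d *m Tk i.+1 *m Pdeg i.+1 d.
  apply/matrixP => c a; rewrite mul_mx_diag mul_diag_mx !mxE.
  have [//|dga] := eqVneq (dg i.+1 a) d; first by rewrite mulr1.
  by case: eqP => dgc; rewrite ?mul0r // mulr0 mcoeff0_D ?mulr0 // dgc eq_sym.
exact: submxMl.
Qed.

(* The conclusion on [y'] says that the degree-[d] part of [y'] lies in [m F]. *)
Lemma deg_residue_boundary i d (y : 'I_(rk i.+1) -> R) (z : 'rV_(rk i.+2)) :
  deg_residue d y = z *m (Pdeg i.+2 d *m Tk i.+1) ->
  exists y', (forall a, dmap y' a = dmap y a) /\ forall c, (homog_part d y' c)@_0 = 0.
Proof.
move=> yz.
pose Z : 'I_(rk i.+2) -> R := fun e => ((dg i.+2 e == d)%:R * z 0 e)%:MP.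
exists (fun c => y c - dmap Z c); split.
  by move=> a; rewrite (dmapD y (fun c => - dmap Z c)) dmapN dmapK subr0.
move=> c; rewrite /homog_part; case: leqP => le_cd; last by rewrite mcoeff0.
rewrite mcoeff_pihomog mdeg0; case: eqP => // /eqP; rewrite eq_sym subn_eq0 => le_dc.
have dgc : dg i.+1 c = d by lia.
have := congr1 (fun M : 'rV[k]_(rk i.+1) => M 0 c) yz.
rewrite !mxE dgc eqxx mul1r /Defs.Pdeg mul_diag_mx => yc0.
rewrite mcoeffB yc0 mcoeff0_dmap; apply/eqP; rewrite subr_eq0; apply/eqP/eq_bigr => e _.
by rewrite !mxE /Z mcoeffC eqxx mulr1; ring.
Qed.

End Resolution.

Section SocleArgument.
Variable k : fieldType.
Local Notation R := {mpoly k[3]}.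
Variables (I : R -> Prop) (degs : nat -> seq nat) (D : nat -> nat -> nat -> R) (e0 : nat -> R).
Variables (n : nat) (l s : R) (v0 : 'I_(rk degs 0) -> R) (wl : 'I_(rk degs 1) -> R).
Hypotheses (hI : homogeneous_ideal I) (hres : graded_free_resolution degs D e0 I).
Hypotheses (hl : l \is 1.-homog) (hG : minimal_generator_of_degree I (l * s) n).
Hypotheses (hv0 : I (s - aug e0 v0)) (hwl : forall b, l * v0 b = dmap D wl b).

Local Notation rk := (rk degs).
Local Notation dmap := (dmap D).
Local Notation aug := (aug e0).

Lemma lift_ann q : I (q * s) -> exists w : 'I_(rk 1) -> R, forall b, q * v0 b = dmap w b.
Proof.
case: hI => [[_ [ID IM]] _] Iqs; case: hres => _ _ _ exact0 _.
apply/(exact0 (fun b => q * v0 b)); rewrite augMl.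
rewrite (_ : q * aug v0 = q * s + - (q * (s - aug v0))); last by ring.
by apply: ID => //; apply: ideal_opp hI.1 _; apply: IM.
Qed.

Lemma syzygy_of_lifts q w : (forall b, q * v0 b = dmap w b) ->
  exists y : 'I_(rk 2) -> R, forall a, q * wl a - l * w a = dmap y a.
Proof.
move=> hw; case: hres => _ _ _ _ exact; apply/(exact 0 (fun a => q * wl a - l * w a)) => b.
by rewrite dmapD dmapN !dmapMl -hw -hwl; ring.
Qed.

Lemma homog_lift_notin_mF (g : 'I_3 -> R) (Y : 'I_(rk 2) -> R) (r : 'I_(rk 1) -> 'I_3 -> R) :
  (forall i, in_m (g i)) ->
  ~ (forall a, homog_part n wl a = dmap Y a + \sum_i g i * r a i).
Proof.
move=> g0 wlE; apply: (minimal_generator_notin_mI hI.1 hG).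
have -> : l * s = pihomog mdeg n (l * aug v0) + pihomog mdeg n (l * (s - aug v0)).
  by rewrite -pihomogD -mulrDr addrC subrK pihomog_dE //; case: hG.
have -> : l * aug v0 = aug (dmap wl) by rewrite -augMl; apply: eq_aug.
rewrite -(homog_part_aug hres).
under eq_aug => b do rewrite -(homog_part_dmap hres) (eq_dmap D _ wlE) dmapD dmap_sum.
rewrite augD (aug_dmapK hres) add0r aug_sum; apply: in_mID.
  by apply: in_mI_sum => // i; apply: ideal_aug_dmap hres _.
rewrite (pihomogMl _ _ hl); case: ifP => _; last exact: in_mI0.
by apply: in_mIM; [exact: dhomog_mcoeff0 hl _ | case: hI => _; apply].
Qed.

(* Substituting [X_i := p_i l'] kills [l] and fixes [l'], turning the syzygy
   [d y = l' wl - l w'] into a decomposition of the degree-[n] part of [wl]. *)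
Lemma lin_syzygy_subst (l' : R) (p : 'I_3 -> k) (w' : 'I_(rk 1) -> R) (y : 'I_(rk 2) -> R) :
  l' \is 1.-homog -> \sum_i l@_U_(i) * p i = 0 -> \sum_i l'@_U_(i) * p i = 1 ->
  (forall a, dmap y a = l' * wl a - l * w' a) ->
  (forall c, (homog_part n.+1 y c)@_0 = 0) ->
  exists (Y : 'I_(rk 2) -> R) (r : 'I_(rk 1) -> 'I_3 -> R),
    forall a, homog_part n wl a = dmap Y a + \sum_i ('X_i - p i *: l') * r a i.
Proof.
move=> hl' hpl hpl' dy y0.
pose lq := [tuple p i *: l' | i < 3].
have lqE (i : 'I_3) : lq`_i = p i *: l' by rewrite nth_mktuple.
have pi_l : l \mPo lq = 0 by rewrite comp_mpoly_dhomog1 // hpl scale0r.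
have pi_l' : l' \mPo lq = l' by rewrite comp_mpoly_dhomog1 // hpl' scale1r.
have l'_neq0 : l' != 0.
  apply/eqP => l'0; move: hpl'; rewrite l'0 big1 => [/eqP|i _]; last by rewrite mcoeff0 mul0r.
  by rewrite eq_sym oner_eq0.
have /fin_all_exists[q yq] c : exists q : 'I_3 -> R, homog_part n.+1 y c = \sum_i 'X_i * q i.
  by have [q ->] := mcoeff0_eq0_in_ideal_X (y0 c); exists q.
have dyq a : l' * homog_part n wl a - l * homog_part n w' a = \sum_i 'X_i * dmap (fun c => q c i) a.
  rewrite -homog_partB_lin // -(eq_homog_part _ _ dy) -(homog_part_dmap hres).
  by rewrite (eq_dmap D _ yq) dmap_sum.
pose Yp c := \sum_i (p i)%:MP * q c i.
have pi_wl a : (homog_part n wl a - dmap Yp a) \mPo lq = 0.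
  apply: (mulfI l'_neq0); rewrite mulr0 rmorphB mulrBr.
  have := congr1 (comp_mpoly lq) (dyq a).
  rewrite rmorphB !rmorphM /= pi_l' pi_l mul0r subr0 => ->.
  rewrite /Yp dmap_sum !rmorph_sum mulr_sumr /=; apply/eqP; rewrite subr_eq0; apply/eqP.
  by apply: eq_bigr => i _; rewrite !rmorphM /= comp_mpolyXU comp_mpolyC lqE -mul_mpolyC; ring.
have /fin_all_exists[r hr] a : exists r : 'I_3 -> R,
    homog_part n wl a - dmap Yp a = \sum_i ('X_i - lq`_i) * r i.
  by have := sub_comp_mpoly_in_ideal lq (homog_part n wl a - dmap Yp a); rewrite pi_wl subr0.
exists Yp, r => a; rewrite -[LHS](subrK (dmap Yp a)) hr addrC; congr (_ + _).
by apply: eq_bigr => i _; rewrite lqE.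
Qed.

Lemma deg_residue_not_boundary l' p w' y z :
  l' \is 1.-homog -> \sum_i l@_U_(i) * p i = 0 -> \sum_i l'@_U_(i) * p i = 1 ->
  (forall a, dmap y a = l' * wl a - l * w' a) ->
  deg_residue n.+1 y <> z *m (Pdeg k degs 3 n.+1 *m Tk degs D 2).
Proof.
move=> hl' hpl hpl' dy /(deg_residue_boundary hres)[y' [dy' y'0]].
have [Y [r wlE]] := lin_syzygy_subst hl' hpl hpl' (fun a => etrans (dy' a) (dy a)) y'0.
apply: (homog_lift_notin_mF _ wlE) => i.
by rewrite /in_m mcoeffB mcoeffZ in_m_X (dhomog_mcoeff0 hl') // mulr0 subr0.
Qed.

Lemma tor_dim2_ge2 : colon_m I s -> (2 <= tor_dim degs D 2 n.+1)%N.
Proof.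
move=> hs; have [j1 [j2 hp]] := form3_kernel_pair (fun i => l@_U_(i)).
have [w1 /syzygy_of_lifts[y1 hy1]] := lift_ann (hs _ (in_m_X j1)).
have [w2 /syzygy_of_lifts[y2 hy2]] := lift_ann (hs _ (in_m_X j2)).
have cycle_y (j : 'I_3) w y : (forall a, 'X_j * wl a - l * w a = dmap y a) ->
    (deg_residue n.+1 y <= cycles degs D 2 n.+1)%MS.
  move=> hy; apply: (deg_residue_cycle hres) => a.
  by rewrite -hy mcoeffB !(rmorphM (mcoeff 0)) /= in_m_X (dhomog_mcoeff0 hl) // !mul0r subrr.
suff : (2 + \rank (Pdeg k degs 3 n.+1 *m Tk degs D 2) <= \rank (cycles degs D 2 n.+1))%N.
  by rewrite /tor_dim; lia.
apply: (mxrank_indep2_mod (cycle_y _ _ _ hy1) (cycle_y _ _ _ hy2)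
                         (boundaries_sub_cycles hres 1 n.+1)).
move=> al be /submxP[z]; rewrite -deg_residue_lin => hz.
have [albe|] := boolP ((al != 0) || (be != 0)); last first.
  by rewrite negb_or !negbK => /andP[/eqP-> /eqP->].
have [p [hpl hpl']] := hp al be albe.
pose l' := al%:MP * 'X_j1 + be%:MP * 'X_j2.
exfalso; apply: (deg_residue_not_boundary (l' := l')
                  (w' := fun a => al%:MP * w1 a + be%:MP * w2 a) _ hpl _ _ hz).
- by rewrite /l' !mul_mpolyC rpredD ?rpredZ ?dhomogX //= mdeg1.
- have sumX (j : 'I_3) : \sum_i ('X_j : R)@_U_(i) * p i = p j.
    rewrite (bigD1 j) //= mcoeffXU eqxx mul1r big1 ?addr0 // => i.
    by rewrite mcoeffXU eq_sym => /negbTE ->; rewrite mul0r.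
  rewrite -[RHS]hpl' /l'; under eq_bigr do rewrite mcoeffD !mcoeffCM mulrDl -!mulrA.
  by rewrite big_split /= -!mulr_sumr !sumX.
- move=> a; rewrite dmapD !dmapMl -hy1 -hy2 /l'; ring.
Qed.

End SocleArgument.

Theorem lemmaA6 (k : fieldType) (I : {mpoly k[3]} -> Prop) (n : nat)
    (l s : {mpoly k[3]}) :
  homogeneous_ideal I -> m_primary I ->
  l \is 1.-homog ->
  socle_generator I s ->
  minimal_generator_of_degree I (l * s) n ->
  forall (degs : nat -> seq nat) (D : nat -> nat -> nat -> {mpoly k[3]})
         (e0 : nat -> {mpoly k[3]}),
    graded_free_resolution degs D e0 I ->
    (2 <= tor_dim degs D 2 n.+1)%N.
Proof.
move=> hI _ hl [S [_ [S_socle _] _ s_in]] hG degs D e0 hres.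
have [v0 hv0] : exists v0 : 'I_(rk degs 0) -> _, I (s - aug e0 v0).
  by case: hres => _ _ surj _ _; apply: surj.
have Ils : I (l * s) by case: hG => _ [Gs [_ gen _ ls_in]]; apply: generates_mem gen ls_in.
have [wl hwl] := lift_ann hI hres hv0 Ils.
exact: tor_dim2_ge2 hI hres hl hG hv0 hwl (S_socle s s_in).
Qed.
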